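(* Let $\mathcal{R}$ be a coherent risk measure on $\mathscr{L}^2$ with dual representation $\mathcal{R}(\xi_0)=\sup_{\eta_0\in\mathcal{Q}}\mathbb{E}(\xi_0\eta_0)$ for all $\xi_0\in\mathscr{L}^2$, where $\mathcal{Q}\subset\mathcal{P}$ is its (unique) risk envelope, and let $\mathcal{V}$ be a coherent regret measure on $\mathscr{L}^2$ with dual representation $\mathcal{V}(\xi_0)=\sup_{\eta_0\in\tilde{\mathcal{Q}}}\mathbb{E}(\xi_0\eta_0)$ for all $\xi_0\in\mathscr{L}^2$, where $\tilde{\mathcal{Q}}\subset\tilde{\mathcal{P}}$ is its (unique) regret envelope and $\tilde{\mathcal{Q}}$ is compact. Then $$\mathcal{R}(\xi_0)=\inf_{y\in\mathbb{R}}\{\,y+\mathcal{V}(\xi_0-y)\,\}\quad\text{for all }\xi_0\in\mathscr{L}^2$$ holds if and only if $\mathcal{Q}=\tilde{\mathcal{Q}}\cap\mathcal{P}$.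
   Context: $\mathscr{L}^2$ denotes the space of square-integrable real random variables on a fixed probability space with probability measure $\mathbb{P}$; $\mathbb{E}$ is expectation with respect to $\mathbb{P}$; inequalities between random variables hold almost everywhere. A functional $\mathcal{R}:\mathscr{L}^2\to(-\infty,+\infty]$ is a coherent risk measure if: (A1) $\mathcal{R}(C)=C$ for every constant $C$; (A2) $\mathcal{R}((1-\lambda)\xi_0+\lambda\xi_0')\le(1-\lambda)\mathcal{R}(\xi_0)+\lambda\mathcal{R}(\xi_0')$ for $\lambda\in[0,1]$; (A3) $\mathcal{R}(\xi_0)\le\mathcal{R}(\xi_0')$ whenever $\xi_0\le\xi_0'$ a.e.; (A4) if $\|\xi_0^k-\xi_0\|_2\to0$ and $\mathcal{R}(\xi_0^k)\le C$ for all $k$, then $\mathcal{R}(\xi_0)\le C$; (A5) $\mathcal{R}(\lambda\xi_0)=\lambda\mathcal{R}(\xi_0)$ for $\lambda>0$. A functional $\mathcal{V}:\mathscr{L}^2\to(-\infty,+\infty]$ is a coherent regret measure if: (B1) $\mathcal{V}(0)=0$; (B2) $\mathcal{V}$ is convex in the sense of (A2); (B3) $\mathcal{V}(\xi_0)\le\mathcal{V}(\xi_0')$ whenever $\xi_0\le\xi_0'$ a.e.; (B4) if $\|\xi_0^k-\xi_0\|_2\to0$ and $\mathcal{V}(\xi_0^k)\le0$ for all $k$, then $\mathcal{V}(\xi_0)\le0$; (B5) $\mathcal{V}(\lambda\xi_0)=\lambda\mathcal{V}(\xi_0)$ for $\lambda>0$. Set $\mathcal{P}=\{\eta_0\in\mathscr{L}^2:\mathbb{E}(\eta_0)=1,\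 \eta_0\ge0\}$ and $\tilde{\mathcal{P}}=\{\eta_0\in\mathscr{L}^2:\eta_0\ge0\}$. Every coherent risk measure $\mathcal{R}$ admits a unique nonempty, convex, closed set $\mathcal{Q}\subset\mathcal{P}$ (its risk envelope) with $\mathcal{R}(\xi_0)=\sup_{\eta_0\in\mathcal{Q}}\mathbb{E}(\xi_0\eta_0)$; every coherent regret measure $\mathcal{V}$ admits a unique nonempty, convex, closed set $\tilde{\mathcal{Q}}\subset\tilde{\mathcal{P}}$ with $\mathcal{V}(\xi_0)=\sup_{\eta_0\in\tilde{\mathcal{Q}}}\mathbb{E}(\xi_0\eta_0)$. *)

From HB Require Import structures.
From mathcomp Require Import all_boot all_order all_algebra.
From mathcomp Require Import all_classical all_reals all_analysis.
Set Implicit Arguments. Unset Strict Implicit. Unset Printing Implicit Defensive.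
Import Order.TTheory GRing.Theory Num.Theory.
Import numFieldNormedType.Exports.
Local Open Scope classical_set_scope.
Local Open Scope ring_scope.

Section L2defs.
Context {d : measure_display} {T : measurableType d} {R : realType}
  (P : probability T R).

Definition L2 (f : T -> R) : Prop :=
  measurable_fun setT f /\ P.-integrable setT (fun x => ((f x) ^+ 2)%:E).

Definition Ex (f : T -> R) : \bar R := (\int[P]_x (f x)%:E)%E.

Definition L2dist (f g : T -> R) : R :=
  Num.sqrt (fine (\int[P]_x (((f x - g x) ^+ 2)%:E))%E).

Definition L2conv (u : nat -> T -> R) (f : T -> R) : Prop :=
  (fun k => L2dist (u k) f) @ \oo --> 0.

Definition Pset : set (T -> R) :=
  [set eta | L2 eta /\ Ex eta = 1%E /\ {ae P, forall x, 0 <= eta x}].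
Definition Ptset : set (T -> R) :=
  [set eta | L2 eta /\ {ae P, forall x, 0 <= eta x}].

Definition L2convex (Q : set (T -> R)) : Prop :=
  forall eta eta' (l : R), Q eta -> Q eta' -> 0 <= l <= 1 ->
    Q (fun x => (1 - l) * eta x + l * eta' x).
Definition L2closed (Q : set (T -> R)) : Prop :=
  forall f, L2 f -> (forall e : R, 0 < e -> exists2 g, Q g & L2dist f g < e) ->
    Q f.
Definition L2compact (Q : set (T -> R)) : Prop :=
  forall u : nat -> T -> R, (forall n, Q (u n)) ->
    exists phi : nat -> nat, (forall n, (phi n < phi n.+1)%N) /\
      exists2 l, Q l & L2conv (fun n => u (phi n)) l.

Definition dual_sup (Q : set (T -> R)) (xi : T -> R) : \bar R :=
  ereal_sup [set Ex (fun x => xi x * eta x) | eta in Q].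

Definition coherent_risk (Rm : (T -> R) -> \bar R) : Prop :=
  (forall xi, L2 xi -> Rm xi != -oo%E) /\ [/\
      (forall C : R, Rm (fun _ => C) = C%:E),
      (forall xi xi' (l : R), L2 xi -> L2 xi' -> 0 <= l <= 1 ->
         (Rm (fun x => ((1 - l) * xi x + l * xi' x)%R) <=
          (1 - l)%:E * Rm xi + l%:E * Rm xi')%E),
      (forall xi xi', L2 xi -> L2 xi' -> {ae P, forall x, xi x <= xi' x} ->
         (Rm xi <= Rm xi')%E),
      (forall (u : nat -> T -> R) xi (C : R), (forall k, L2 (u k)) -> L2 xi ->
         L2conv u xi -> (forall k, (Rm (u k) <= C%:E)%E) -> (Rm xi <= C%:E)%E) &
      (forall xi (l : R), L2 xi -> 0 < l -> Rm (fun x => (l * xi x)%R) = (l%:E * Rm xi)%E)].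

Definition coherent_regret (V : (T -> R) -> \bar R) : Prop :=
  (forall xi, L2 xi -> V xi != -oo%E) /\ [/\
      V (fun _ => 0) = 0%E,
      (forall xi xi' (l : R), L2 xi -> L2 xi' -> 0 <= l <= 1 ->
         (V (fun x => ((1 - l) * xi x + l * xi' x)%R) <=
          (1 - l)%:E * V xi + l%:E * V xi')%E),
      (forall xi xi', L2 xi -> L2 xi' -> {ae P, forall x, xi x <= xi' x} ->
         (V xi <= V xi')%E),
      (forall (u : nat -> T -> R) xi, (forall k, L2 (u k)) -> L2 xi ->
         L2conv u xi -> (forall k, (V (u k) <= 0)%E) -> (V xi <= 0)%E) &
      (forall xi (l : R), L2 xi -> 0 < l -> V (fun x => (l * xi x)%R) = (l%:E * V xi)%E)].

End L2defs.

From HB Require Import structures.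
From mathcomp Require Import all_boot all_order all_algebra.
From mathcomp Require Import all_classical all_reals all_analysis.
From mathcomp Require Import measurable_realfun ring lra.
Set Implicit Arguments. Unset Strict Implicit. Unset Printing Implicit Defensive.
Import Order.TTheory GRing.Theory Num.Theory.
Import numFieldNormedType.Exports.
Local Open Scope classical_set_scope.
Local Open Scope ring_scope.

(* Write [E] for the expectation. For [eta] in [Qt] with [E eta = 1],
   [y + E ((xi - y) eta) = E (xi eta)], so the mixing formula
   [inf_y (y + V (xi - y))] always dominates the support functional of
   [Qt `&` Pset]. The reverse inequality is a minimax statement: for [c] above
   that support functional, project [(1, c)] onto the compact convex image of
   [Qt] under [eta |-> (E eta, E (xi eta))] and read off [y] from the normal
   direction. Hence the formula holds iff [Q] and [Qt `&` Pset] have the same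
   support functional. Finally, a closed convex compact set whose support
   functional dominates that of another set contains it: a point outside is
   strictly separated from it by its L^2 projection. *)

Section L2_inner_product.
Context {d : measure_display} {T : measurableType d} {R : realType}
  (P : probability T R).
Implicit Types (f g h l xi eta : T -> R) (u : nat -> T -> R) (K : set (T -> R)).

Lemma integrable_L2M f g : L2 P f -> L2 P g ->
  P.-integrable setT (EFin \o (fun x => f x * g x)).
Proof.
move=> [mf If] [mg Ig].
have Ifg : P.-integrable setT (EFin \o (fun x => f x ^+ 2 + g x ^+ 2)).
  by apply: eq_integrable (integrableD _ If Ig) => // x.
apply: le_integrable Ifg => //.
  by apply/measurable_EFinP; exact: measurable_funM.
move=> x _ /=; rewrite lee_fin [X in _ <= X]ger0_norm ?addr_ge0 ?sqr_ge0 // ler_norml.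
have h1 := sqr_ge0 (f x - g x); have h2 := sqr_ge0 (f x + g x).
by apply/andP; split; nra.
Qed.

Lemma L2D f g : L2 P f -> L2 P g -> L2 P (fun x => f x + g x).
Proof.
move=> [mf If] [mg Ig]; split; first exact: measurable_funD.
have I2 : P.-integrable setT (EFin \o (fun x => 2 * f x ^+ 2 + 2 * g x ^+ 2)).
  apply: eq_integrable (integrableD _ (integrableZl _ 2 If) (integrableZl _ 2 Ig)) => //.
apply: le_integrable I2 => //.
  by apply/measurable_EFinP; apply: measurable_funX; exact: measurable_funD.
move=> x _ /=; rewrite lee_fin !ger0_norm ?sqr_ge0 //; last first.
  by rewrite addr_ge0 // mulr_ge0 ?sqr_ge0.
by have := sqr_ge0 (f x - g x); nra.
Qed.

Lemma L2Z (a : R) f : L2 P f -> L2 P (fun x => a * f x).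
Proof.
move=> [mf If]; split; first exact: measurable_funM.
by apply: eq_integrable (integrableZl _ (a ^+ 2) If) => // x _ /=; rewrite exprMn.
Qed.

Lemma L2cst (a : R) : L2 P (fun _ => a).
Proof. by split; [exact: measurable_cst | exact: finite_measure_integrable_cst]. Qed.

Lemma L2B f g : L2 P f -> L2 P g -> L2 P (fun x => f x - g x).
Proof.
move=> Lf Lg; have := L2D Lf (L2Z (-1) Lg).
by congr L2; apply: funext => x; rewrite mulN1r.
Qed.

Definition ip f g : R := Rintegral P setT (fun x => f x * g x).

Lemma ipC f g : ip f g = ip g f.
Proof. by apply: eq_Rintegral => x _; rewrite mulrC. Qed.

Lemma ip_sqr_ge0 f : 0 <= ip f f.
Proof. by apply: Rintegral_ge0 => x _; rewrite -expr2 sqr_ge0. Qed.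

Lemma ipDr f g h : L2 P f -> L2 P g -> L2 P h ->
  ip h (fun x => f x + g x) = ip h f + ip h g.
Proof.
move=> Lf Lg Lh; rewrite /ip -RintegralD //; try exact: integrable_L2M.
by apply: eq_Rintegral => x _; rewrite mulrDr.
Qed.

Lemma ipZr (a : R) f h : L2 P f -> L2 P h ->
  ip h (fun x => a * f x) = a * ip h f.
Proof.
move=> Lf Lh; rewrite /ip -RintegralZl //; last exact: integrable_L2M.
by apply: eq_Rintegral => x _; rewrite mulrCA.
Qed.

Lemma ip_combr (a b : R) f g h : L2 P f -> L2 P g -> L2 P h ->
  ip h (fun x => a * f x + b * g x) = a * ip h f + b * ip h g.
Proof. by move=> Lf Lg Lh; rewrite ipDr ?ipZr //; exact: L2Z. Qed.

Lemma ipBr f g h : L2 P f -> L2 P g -> L2 P h ->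
  ip h (fun x => f x - g x) = ip h f - ip h g.
Proof.
move=> Lf Lg Lh; have := ip_combr 1 (-1) Lf Lg Lh.
rewrite mul1r mulN1r => <-; congr ip; apply: funext => x; ring.
Qed.

Lemma ip_sqr_comb (a b : R) f g : L2 P f -> L2 P g ->
  ip (fun x => a * f x + b * g x) (fun x => a * f x + b * g x) =
  a ^+ 2 * ip f f + 2 * a * b * ip f g + b ^+ 2 * ip g g.
Proof.
move=> Lf Lg; have Lfg := L2D (L2Z a Lf) (L2Z b Lg).
rewrite ip_combr // (ipC _ f) (ipC _ g) !ip_combr // (ipC g f); ring.
Qed.

Lemma ip_sqrB f g : L2 P f -> L2 P g ->
  ip (fun x => f x - g x) (fun x => f x - g x) = ip f f - 2 * ip f g + ip g g.
Proof.
move=> Lf Lg; have := ip_sqr_comb 1 (-1) Lf Lg.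
have -> : (fun x => 1 * f x + -1 * g x) = (fun x => f x - g x).
  by apply: funext => x; ring.
by move=> ->; ring.
Qed.

Lemma ip_cauchy_schwarz f g : L2 P f -> L2 P g -> ip f g ^+ 2 <= ip f f * ip g g.
Proof.
move=> Lf Lg.
have q1 := ip_sqr_ge0 (fun x => ip g g * f x + - ip f g * g x).
have q2 := ip_sqr_ge0 (fun x => - ip f g * f x + ip f f * g x).
have q3 := ip_sqr_ge0 (fun x => 1 * f x + - ip f g * g x).
rewrite !ip_sqr_comb // in q1 q2 q3.
have := ip_sqr_ge0 f; have := ip_sqr_ge0 g.
move: q1 q2 q3; set A := ip f f; set B := ip g g; set c := ip f g.
move=> q1 q2 q3 B0 A0.
have [Bpos|] := ltP 0 B; first by nra.
have [Apos|] := ltP 0 A; first by nra.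
by nra.
Qed.

Lemma Ex_mul f g : L2 P f -> L2 P g -> Ex P (fun x => f x * g x) = (ip f g)%:E.
Proof.
move=> Lf Lg; rewrite /ip /Rintegral fineK //.
exact: integrable_fin_num (integrable_L2M Lf Lg).
Qed.

Lemma L2dist_ip f g :
  L2dist P f g = Num.sqrt (ip (fun x => f x - g x) (fun x => f x - g x)).
Proof.
by rewrite /L2dist /ip /Rintegral; congr (Num.sqrt (fine _));
  apply: eq_integral => x _; rewrite expr2.
Qed.

Lemma L2dist_sym f g : L2dist P f g = L2dist P g f.
Proof.
rewrite /L2dist; congr (Num.sqrt (fine _)); apply: eq_integral => x _.
by rewrite -sqrrN opprB.
Qed.

Lemma ip_cvg h u l : L2 P h -> (forall n, L2 P (u n)) -> L2 P l ->
  L2conv P u l -> ip h (u n) @[n --> \oo] --> ip h l.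
Proof.
move=> Lh Lu Ll ul; set s := Num.sqrt (ip h h).
have dist_le n : `|ip h (u n) - ip h l| <= s * L2dist P (u n) l.
  rewrite -ipBr // L2dist_ip -sqrtrM ?ip_sqr_ge0 // -sqrtr_sqr ler_sqrt.
    exact: ip_cauchy_schwarz (L2B (Lu n) Ll).
  by rewrite mulr_ge0 ?ip_sqr_ge0.
have sd : s * L2dist P (u n) l @[n --> \oo] --> 0.
  by rewrite -(mulr0 s); exact: cvgM (cvg_cst s) ul.
have bounds : \forall n \near \oo,
    ip h l - s * L2dist P (u n) l <= ip h (u n) <= ip h l + s * L2dist P (u n) l.
  by near=> n; rewrite -ler_distl dist_le.
apply: (squeeze_cvgr bounds).
- by rewrite -[X in _ --> X]subr0; apply: cvgB => //; exact: cvg_cst.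
- by rewrite -[X in _ --> X]addr0; apply: cvgD => //; exact: cvg_cst.
Unshelve. all: by end_near.
Qed.

Lemma ip_sqr_cvg u l : (forall n, L2 P (u n)) -> L2 P l -> L2conv P u l ->
  ip (u n) (u n) @[n --> \oo] --> ip l l.
Proof.
move=> Lu Ll ul.
have expand n :
    ip (u n) (u n) = L2dist P (u n) l * L2dist P (u n) l + (2 * ip l (u n) - ip l l).
  by rewrite -expr2 L2dist_ip sqr_sqrtr ?ip_sqr_ge0 // ip_sqrB // (ipC (u n) l); ring.
rewrite (funext expand).
rewrite [X in _ --> X](_ : _ = 0 * 0 + (2 * ip l l - ip l l)); last by ring.
apply: cvgD; first exact: cvgM.
by apply: cvgB; [apply: cvgM; [exact: cvg_cst | exact: ip_cvg] | exact: cvg_cst].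
Qed.

Lemma L2compact_argmin K (D : (T -> R) -> R) :
  K !=set0 -> L2compact P K -> (forall f, K f -> 0 <= D f) ->
  (forall u l, (forall n, K (u n)) -> K l -> L2conv P u l ->
     D (u n) @[n --> \oo] --> D l) ->
  exists2 p, K p & forall q, K q -> D p <= D q.
Proof.
move=> [f0 Kf0] Kc D0 Dcvg.
have lbD : has_lbound (D @` K) by exists 0 => _ [f Kf <-]; exact: D0.
have infD : has_inf (D @` K) by split => //; exists (D f0), f0.
pose m := inf (D @` K).
have near_inf n : exists f, K f /\ D f < m + harmonic n.
  by have [_ [f Kf <-] ?] := inf_adherent (harmonic_gt0 n) infD; exists f.
have [u /all_and2[Ku Du]] := choice near_inf.
have [phi [phi_incr [l Kl ul]]] := Kc u Ku.
have phi_ge n : (n <= phi n)%N.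
  by elim: n => // n ih; exact: leq_ltn_trans ih (phi_incr n).
exists l => // q Kq; apply: (le_trans _ (ge_inf lbD _)); last by exists q.
rewrite -/m -[m]addr0; apply: (ler_cvg_to (Dcvg _ _ (fun n => Ku (phi n)) Kl ul)).
  by apply: cvgD; [exact: cvg_cst | exact: cvg_harmonic].
near=> n; apply/ltW/(lt_le_trans (Du (phi n))); rewrite lerD2l /harmonic /=.
by rewrite lef_pV2 ?posrE ?ltr0Sn // ler_nat ltnS.
Unshelve. all: by end_near.
Qed.

Lemma convex_argmin_slope_le0 K (D : (T -> R) -> R) p eta (s B : R) :
  L2convex K -> K p -> K eta -> (forall q, K q -> D p <= D q) ->
  (forall t, 0 < t <= 1 ->
     D (fun x => (1 - t) * p x + t * eta x) = D p - 2 * t * s + t ^+ 2 * B) ->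
  s <= 0.
Proof.
move=> Kcv Kp Keta pmin Dseg; rewrite leNgt; apply/negP => s_pos.
have nB := normr_ge0 B; have B_le := ler_norm B.
pose t := Num.min 1 (s / (`|B| + 1)).
have t_pos : 0 < t by rewrite lt_min ltr01 divr_gt0 //; lra.
have t_le1 : t <= 1 by rewrite ge_min lexx.
have t_small : t * (`|B| + 1) <= s.
  by rewrite -ler_pdivlMr; [rewrite ge_min lexx orbT | lra].
have := pmin _ (Kcv p eta t Kp Keta _); rewrite Dseg ?t_pos ?t_le1 ?(ltW t_pos) //.
nra.
Qed.

Lemma L2_projection K eta0 :
  K !=set0 -> L2compact P K -> L2convex K -> K `<=` L2 P -> L2 P eta0 ->
  exists2 p, K p & forall eta, K eta ->
    ip (fun x => eta0 x - p x) (fun x => eta x - p x) <= 0.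
Proof.
move=> K0 Kc Kcv KL L0.
pose D f := ip (fun x => eta0 x - f x) (fun x => eta0 x - f x).
have [p Kp pmin] : exists2 p, K p & forall q, K q -> D p <= D q.
  apply: L2compact_argmin => // [f _|u l Ku Kl ul]; first exact: ip_sqr_ge0.
  apply: ip_sqr_cvg => [n||]; [exact: L2B (KL _ (Ku n)) | exact: L2B (KL _ Kl) |].
  rewrite /L2conv; suff -> : (fun n => L2dist P (fun x => eta0 x - u n x)
                                           (fun x => eta0 x - l x)) =
                             (fun n => L2dist P (u n) l) by [].
  apply: funext => n; rewrite /L2dist; congr (Num.sqrt (fine _)).
  by apply: eq_integral => x _; congr EFin; ring.
exists p => // eta Keta.
have [Lp Le] := (KL _ Kp, KL _ Keta).
apply: (convex_argmin_slope_le0 (B := ip (fun x => eta x - p x) (fun x => eta x - p x))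
  Kcv Kp Keta pmin) => t _.
rewrite /D /=.
have -> : (fun x => eta0 x - ((1 - t) * p x + t * eta x)) =
          (fun x => 1 * (eta0 x - p x) + - t * (eta x - p x)).
  by apply: funext => x; ring.
by rewrite ip_sqr_comb; [ring | exact: L2B | exact: L2B].
Qed.

Lemma L2_separation K eta0 :
  K !=set0 -> L2compact P K -> L2convex K -> L2closed P K -> K `<=` L2 P ->
  L2 P eta0 -> ~ K eta0 ->
  exists2 xi, L2 P xi &
    exists2 c : R, (forall eta, K eta -> ip xi eta <= c) & c < ip xi eta0.
Proof.
move=> K0 Kc Kcv Kcl KL L0 nK.
have [p Kp proj] := L2_projection K0 Kc Kcv KL L0.
have Lp := KL _ Kp; pose xi x := eta0 x - p x; have Lxi : L2 P xi := L2B L0 Lp.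
exists xi => //; exists (ip xi p) => [eta Keta|].
  by have := proj _ Keta; rewrite ipBr // ?subr_le0 //; exact: KL.
have xi_neq0 : ip xi xi != 0.
  apply/eqP => xi0; apply: nK; apply: Kcl => // e e0; exists p => //.
  by rewrite L2dist_ip xi0 sqrtr0.
have xi_pos : 0 < ip xi xi by rewrite lt_def xi_neq0 ip_sqr_ge0.
have : ip xi xi = ip xi eta0 - ip xi p := ipBr L0 Lp Lxi.
lra.
Qed.

Lemma planar_projection K h1 h2 (z1 z2 : R) :
  K !=set0 -> L2compact P K -> L2convex K -> K `<=` L2 P -> L2 P h1 -> L2 P h2 ->
  exists2 p, K p & forall eta, K eta ->
    (z1 - ip h1 p) * (ip h1 eta - ip h1 p) + (z2 - ip h2 p) * (ip h2 eta - ip h2 p)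
      <= 0.
Proof.
move=> K0 Kc Kcv KL Lh1 Lh2.
pose D f := (z1 - ip h1 f) ^+ 2 + (z2 - ip h2 f) ^+ 2.
have [p Kp pmin] : exists2 p, K p & forall q, K q -> D p <= D q.
  apply: L2compact_argmin => // [f _|u l Ku Kl ul]; first by rewrite addr_ge0 ?sqr_ge0.
  have Lu n := KL _ (Ku n); have Ll := KL _ Kl.
  by apply: cvgD; apply: cvgM; apply: cvgB; try exact: cvg_cst; exact: ip_cvg.
exists p => // eta Keta.
have [Lp Le] := (KL _ Kp, KL _ Keta).
apply: (convex_argmin_slope_le0
  (B := (ip h1 eta - ip h1 p) ^+ 2 + (ip h2 eta - ip h2 p) ^+ 2) Kcv Kp Keta pmin).
by move=> t _; rewrite /D !ip_combr //; ring.
Qed.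

(* [y = - al / be], where [(al, be)] points from the projection of [(1, c)]
   onto the image of [K] under [eta |-> (E eta, E (xi eta))] to [(1, c)];
   [be > 0] since that image meets the line [E eta = 1] only below [c]. *)
Lemma lagrange_multiplier K xi (c : R) :
  L2compact P K -> L2convex K -> K `<=` L2 P -> L2 P xi ->
  (exists2 eta1, K eta1 & ip (fun=> 1) eta1 = 1) ->
  (forall eta, K eta -> ip (fun=> 1) eta = 1 -> ip xi eta < c) ->
  exists y, forall eta, K eta -> ip xi eta - y * ip (fun=> 1) eta <= c - y.
Proof.
move=> Kc Kcv KL Lxi [eta1 K1 mean1] lt_c.
have [p Kp proj] :=
  planar_projection 1 c (ex_intro _ eta1 K1) Kc Kcv KL (L2cst 1) Lxi.
have := proj _ K1; rewrite mean1 => proj1.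
move: proj proj1 (lt_c _ K1 mean1) (lt_c _ Kp).
set a := ip (fun=> 1); set b := ip xi; set al := 1 - a p; set be := c - b p.
move=> proj proj1 b1_lt bp_lt.
have p_off : 0 < al ^+ 2 + be ^+ 2.
  have [/bp_lt ap1|ap_neq1] := eqVneq (a p) 1; first by rewrite /be; nra.
  have : 0 < al ^+ 2 by rewrite lt_def sqr_ge0 andbT sqrf_eq0 subr_eq0 eq_sym.
  have := sqr_ge0 be; lra.
have be_pos : 0 < be.
  have [//|be_le0] := ltP 0 be.
  have : 0 <= be * (b eta1 - c) by rewrite mulr_le0 // subr_le0 ltW.
  have : b eta1 - b p = (b eta1 - c) + be by rewrite /be; ring.
  nra.
exists (- al / be) => eta Keta.
have hy : be * (- al / be) = - al by rewrite mulrC divfK // gt_eqF.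
rewrite -(ler_pM2l be_pos) !mulrBr mulrA hy.
have : al * a p + be * b p = al + be * c - (al ^+ 2 + be ^+ 2) by rewrite /al /be; ring.
have := proj _ Keta; lra.
Qed.

Lemma L2closed_sub_compact K K' : K `<=` K' -> L2compact P K' -> L2closed P K ->
  K' `<=` L2 P -> L2compact P K.
Proof.
move=> KK' K'c Kcl K'L u Ku.
have [phi [phi_incr [l K'l ul]]] := K'c u (fun n => KK' _ (Ku n)).
exists phi; split => //; exists l => //.
apply: Kcl (K'L _ K'l) _ => e e0.
have /cvgrPdist_lt/(_ e e0)[N _ HN] := ul.
exists (u (phi N)) => //; rewrite L2dist_sym.
by have := HN N (leqnn N); rewrite /= sub0r normrN ger0_norm // sqrtr_ge0.
Qed.

Lemma dual_supE K xi : K `<=` L2 P -> L2 P xi ->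
  dual_sup P K xi = ereal_sup [set (ip xi eta)%:E | eta in K].
Proof.
by move=> KL Lxi; congr ereal_sup; apply: eq_imagel => eta /KL Leta; exact: Ex_mul.
Qed.

Lemma ip_shiftl xi eta (y : R) : L2 P xi -> L2 P eta ->
  ip (fun x => xi x - y) eta = ip xi eta - y * ip (fun=> 1) eta.
Proof.
move=> Lxi Leta; rewrite ipC ipBr //; last exact: L2cst.
rewrite (ipC eta xi) (ipC (fun=> 1) eta) -ipZr //; last exact: L2cst.
by congr (_ - ip _ _); apply: funext => x; rewrite mulr1.
Qed.

Lemma Ex_ip1 eta : L2 P eta -> Ex P eta = (ip (fun=> 1) eta)%:E.
Proof.
move=> Leta; rewrite -Ex_mul //; last exact: L2cst.
by congr (Ex P _); apply: funext => x; rewrite mul1r.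
Qed.

Lemma Pset_ip1 eta : Pset P eta -> ip (fun=> 1) eta = 1.
Proof. by move=> [Leta [Eeta _]]; apply: EFin_inj; rewrite -Ex_ip1. Qed.

Lemma Ptset_ip1 eta : Ptset P eta -> ip (fun=> 1) eta = 1 -> Pset P eta.
Proof. by move=> [Leta ae] E1; split => //; split => //; rewrite Ex_ip1 // E1. Qed.

Definition regret_risk K xi : \bar R :=
  ereal_inf [set (y%:E + dual_sup P K (fun x => (xi x - y)%R))%E | y in [set: R]].

Lemma regret_risk_le_dual_sup K xi : (regret_risk K xi <= dual_sup P K xi)%E.
Proof.
have -> : dual_sup P K xi = (0%:E + dual_sup P K (fun x => (xi x - 0)%R))%E.
  by rewrite add0e; congr dual_sup; apply: funext => x; rewrite subr0.
by apply: ereal_inf_lbound; exists 0.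
Qed.

(* Since [E eta = 1] on [Pset], [y + E ((xi - y) eta) = E (xi eta)] for every [y]. *)
Lemma dual_sup_Pset_le_regret_risk K xi : K `<=` L2 P -> L2 P xi ->
  (dual_sup P (K `&` Pset P) xi <= regret_risk K xi)%E.
Proof.
move=> KL Lxi; rewrite dual_supE //; last by move=> eta [/KL].
apply: ge_ereal_sup => _ [eta [Keta Peta] <-]; apply: le_ereal_inf_tmp => _ [y _ <-].
rewrite dual_supE //; last exact: L2B Lxi (L2cst y).
have : ((ip (fun x => xi x - y) eta)%:E <=
        ereal_sup [set (ip (fun x => xi x - y) eta)%:E | eta in K])%E.
  by apply: ereal_sup_ubound; exists eta.
move/(leeD2l y%:E); apply: le_trans.
rewrite ip_shiftl //; last exact: KL.
by rewrite Pset_ip1 // mulr1 -EFinD addrC subrK.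
Qed.

Lemma regret_risk_le_dual_sup_Pset K xi :
  L2compact P K -> L2convex K -> K `<=` Ptset P -> K `&` Pset P !=set0 -> L2 P xi ->
  (regret_risk K xi <= dual_sup P (K `&` Pset P) xi)%E.
Proof.
move=> Kc Kcv KPt [eta1 [K1 P1]] Lxi.
have KL : K `<=` L2 P by move=> eta /KPt[].
rewrite dual_supE //; last by move=> eta [/KL].
set s := ereal_sup _.
have s_ge : ((ip xi eta1)%:E <= s)%E by apply: ereal_sup_ubound; exists eta1.
case Hs : s => [r| |]; [|by rewrite leey|by rewrite Hs in s_ge].
apply/lee_addgt0Pr => e e0.
have [y le_y] : exists y, forall eta, K eta ->
    ip xi eta - y * ip (fun=> 1) eta <= r + e - y.
  apply: lagrange_multiplier => //; first by exists eta1 => //; exact: Pset_ip1.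
  move=> eta Keta E1.
  have : ((ip xi eta)%:E <= s)%E.
    apply: ereal_sup_ubound; exists eta => //.
    by split => //; exact: Ptset_ip1 (KPt _ Keta) E1.
  by rewrite Hs lee_fin; lra.
apply: (@le_trans _ _ (y%:E + dual_sup P K (fun x => (xi x - y)%R))%E).
  by apply: ereal_inf_lbound; exists y.
rewrite dual_supE //; last exact: L2B Lxi (L2cst y).
have : (ereal_sup [set (ip (fun x => xi x - y) eta)%:E | eta in K] <= (r + e - y)%:E)%E.
  apply: ge_ereal_sup => _ [eta Keta <-].
  by rewrite ip_shiftl ?lee_fin ?le_y //; exact: KL.
by move/(leeD2l y%:E); rewrite -EFinD (addrC y) subrK EFinD.
Qed.

Lemma regret_riskE K xi :
  L2compact P K -> L2convex K -> K `<=` Ptset P -> K `&` Pset P !=set0 -> L2 P xi ->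
  regret_risk K xi = dual_sup P (K `&` Pset P) xi.
Proof.
move=> Kc Kcv KPt KP0 Lxi; apply/le_anti/andP; split.
  exact: regret_risk_le_dual_sup_Pset.
by apply: dual_sup_Pset_le_regret_risk => // eta /KPt[].
Qed.

Lemma subset_of_dual_sup_le K K' :
  K !=set0 -> L2compact P K -> L2convex K -> L2closed P K -> K `<=` L2 P ->
  K' `<=` L2 P -> (forall xi, L2 P xi -> (dual_sup P K' xi <= dual_sup P K xi)%E) ->
  K' `<=` K.
Proof.
move=> K0 Kc Kcv Kcl KL K'L le_sup eta0 K'eta0; apply: contrapT => nK.
have [xi Lxi [c le_c c_lt]] := L2_separation K0 Kc Kcv Kcl KL (K'L _ K'eta0) nK.
have : ((ip xi eta0)%:E <= c%:E)%E.
  apply: (@le_trans _ _ (dual_sup P K xi)).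
    apply: le_trans (le_sup _ Lxi); rewrite dual_supE //.
    by apply: ereal_sup_ubound; exists eta0.
  by rewrite dual_supE //; apply: ge_ereal_sup => _ [eta Keta <-]; rewrite lee_fin le_c.
by rewrite lee_fin leNgt c_lt.
Qed.

End L2_inner_product.

Theorem theorem1 (d : measure_display) (T : measurableType d) (R : realType)
  (P : probability T R)
  (Rm : (T -> R) -> \bar R) (Q : set (T -> R))
  (V : (T -> R) -> \bar R) (Qt : set (T -> R)) :
  coherent_risk P Rm ->
  Q !=set0 -> L2convex Q -> L2closed P Q -> Q `<=` Pset P ->
  (forall xi, L2 P xi -> Rm xi = dual_sup P Q xi) ->
  coherent_regret P V ->
  Qt !=set0 -> L2convex Qt -> L2closed P Qt -> Qt `<=` Ptset P ->
  (forall xi, L2 P xi -> V xi = dual_sup P Qt xi) ->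
  L2compact P Qt ->
  ((forall xi, L2 P xi ->
      Rm xi = ereal_inf [set (y%:E + V (fun x => (xi x - y)%R))%E | y in [set: R]])
   <-> Q = Qt `&` Pset P).
Proof.
move=> _ Q0 Qcv Qcl QP RQ _ Qt0 Qtcv Qtcl QtP VQt Qtc.
have QL : Q `<=` L2 P by move=> eta /QP[].
have QtL : Qt `<=` L2 P by move=> eta /QtP[].
have VE xi : L2 P xi ->
    ereal_inf [set (y%:E + V (fun x => (xi x - y)%R))%E | y in [set: R]] =
    regret_risk P Qt xi.
  move=> Lxi; congr ereal_inf; apply: eq_imagel => y _.
  by rewrite VQt //; exact: L2B Lxi (L2cst P y).
split => [RE | QE xi Lxi].
- have QQt : Q `<=` Qt.
    apply: subset_of_dual_sup_le Qt0 Qtc Qtcv Qtcl QtL QL _ => xi Lxi.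
    by rewrite -RQ // RE // VE // regret_risk_le_dual_sup.
  have QQtP : Q `<=` Qt `&` Pset P by move=> eta Qeta; split; [exact: QQt | exact: QP].
  have [eta1 Q1] := Q0.
  apply/seteqP; split => //.
  apply: subset_of_dual_sup_le Q0 (L2closed_sub_compact QQt Qtc Qcl QtL) Qcv Qcl QL _ _.
    by move=> eta [/QtL].
  move=> xi Lxi; rewrite -regret_riskE //; last by exists eta1; exact: QQtP.
  by rewrite -VE // -RE // RQ.
- by rewrite RQ // VE // regret_riskE // -QE.
Qed.
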